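(* Fix any realization of a frame: a finite set $K$ of active devices, slots $\{1,\dots,M\}$, and for each $k\in K$ an intended slot set $I_k\subseteq\{1,\dots,M\}$ and a transmitted slot set $A_k\subseteq I_k$. For each slot $n$ let $A^n=\{k\in K: n\in A_k\}$. Define the genie-aided decoded set $D_{\mathrm g}$ as the result of starting from $D=\emptyset$ and repeatedly adding to $D$ a device $k$ whenever there is a slot $n$ with $A^n\setminus D=\{k\}$, until no such slot exists. Define the IDENTIFY decoded set $D_{\mathrm I}$ as the result of starting from $D=\emptyset$ and repeatedly adding to $D$ a device $k$ whenever there exist a slot $n$ and a subset $T\subseteq S_n(D)$, where $S_n(D)=\{k'\in D: n\in I_{k'}\}$ is the candidate list of slot $n$, such that $T\subseteq A^n$ and $A^n\setminus T=\{k\}$, until no such pair $(n,T)$ yields a new device. Then, with an unlimited number of iterations, $D_{\mathrm I}=D_{\mathrm g}$. Consequently, the IDENTIFY receiver achieves exactly the same packet loss rate as a receiver that knows the positions of the dropped replicas.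
   Context: Setting: irregular repetition slotted ALOHA under a collision channel with energy-harvesting devices. Each active device intends to send identical replicas of its packet in a set $I_k$ of slots of the frame, but some intended replicas may be dropped for lack of energy; $A_k\subseteq I_k$ denotes the slots where replicas were actually transmitted. The receiver knows, upon decoding a device's packet, its intended slot set $I_k$, but not $A_k$. The receiver can classify a slot as idle, singleton (exactly one packet) or collision; subtracting from slot $n$ the packets of a set $T$ of decoded devices yields a singleton slot exactly when all packets in $T$ were actually transmitted in slot $n$ (i.e. $T\subseteq A^n$) and exactly one other packet remains ($|A^n\setminus T|=1$), in which case that remaining packet is decoded. The genie-aided receiver knows the sets $A_k$ and performs standard successive interference cancellation on the transmitted replicas only. The packet loss rate is the probability that a transmitted packet is not decoded by the end of the decoding process. *)

From mathcomp Require Import all_boot.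
From Stdlib Require Import Relations.
Set Implicit Arguments. Unset Strict Implicit. Unset Printing Implicit Defensive.

(* K : finite type of active devices; slots are 'I_M (slot n+1 of the paper is n).
   I k : intended slot set, A k : transmitted slot set (A k \subset I k). *)
Section Decoding.
Variables (K : finType) (M : nat) (I A : K -> {set 'I_M}).

Definition Aslot (n : 'I_M) : {set K} := [set k | n \in A k].

Definition cand (D : {set K}) (n : 'I_M) : {set K} := [set k' in D | n \in I k'].

Definition genie_step (D D' : {set K}) : Prop :=
  exists n k, Aslot n :\: D = [set k] /\ D' = k |: D.

Definition genie_terminal (D : {set K}) : Prop :=
  forall n k, Aslot n :\: D <> [set k].

Definition identify_cond (D : {set K}) (n : 'I_M) (T : {set K}) (k : K) : Prop :=
  T \subset cand D n /\ T \subset Aslot n /\ Aslot n :\: T = [set k].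

Definition identify_step (D D' : {set K}) : Prop :=
  exists n T k, identify_cond D n T k /\ k \notin D /\ D' = k |: D.

Definition identify_terminal (D : {set K}) : Prop :=
  forall n T k, identify_cond D n T k -> k \in D.

Definition genie_result (D : {set K}) : Prop :=
  clos_refl_trans _ genie_step set0 D /\ genie_terminal D.

Definition identify_result (D : {set K}) : Prop :=
  clos_refl_trans _ identify_step set0 D /\ identify_terminal D.

End Decoding.

From mathcomp Require Import all_boot.
From Stdlib Require Import Relations.

Set Implicit Arguments.
Unset Strict Implicit.
Unset Printing Implicit Defensive.

(* Each decoder stays inside the other's final set.  An IDENTIFY step subtracts
   only already decoded packets, so if it reveals a device outside a
   genie-terminal set E, the genie could have revealed the same device from E.
   Conversely, a genie step from D is the IDENTIFY step that subtracts
   T = A^n ∩ D, whose members all intend slot n since A_k ⊆ I_k. *)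

Lemma clos_refl_trans_inv (T : Type) (R : relation T) (P : T -> Prop) :
  (forall x y, R x y -> P x -> P y) ->
  forall x y, clos_refl_trans T R x y -> P x -> P y.
Proof. by move=> stepP x y; elim=> [u v /stepP | | u v w _ IHuv _ IHvw] // /IHuv. Qed.

Lemma setD_sub_set1 (K : finType) (X T E : {set K}) (k : K) :
  T \subset E -> X :\: T = [set k] -> k \notin E -> X :\: E = [set k].
Proof.
move=> TE XT kE; apply/eqP; rewrite eqEsubset -{1}XT setDS //= sub1set inE kE.
by have /setDP[] : k \in X :\: T by rewrite XT set11.
Qed.

Section Decoders.
Variables (K : finType) (M : nat) (I A : K -> {set 'I_M}).

Lemma cand_sub D n : cand I D n \subset D.
Proof. by apply/subsetP => x; rewrite inE => /andP[]. Qed.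

Lemma identify_step_sub_genie_terminal E : genie_terminal A E ->
  forall D D', identify_step I A D D' -> D \subset E -> D' \subset E.
Proof.
move=> termE D D' [n [T [k [[TC [_ XT]] [_ ->]]]]] DE.
rewrite subUset DE andbT sub1set; apply/negPn/negP => kE.
apply: (termE n k); apply: setD_sub_set1 XT kE.
exact: subset_trans TC (subset_trans (cand_sub D n) DE).
Qed.

Hypothesis hA : forall k, A k \subset I k.

Lemma Aslot_setI_cand (D E : {set K}) n :
  D \subset E -> Aslot A n :&: D \subset cand I E n.
Proof.
move=> DE; apply/subsetP => x; rewrite !inE => /andP[xA xD].
by rewrite (subsetP DE _ xD) (subsetP (hA x) _ xA).
Qed.

Lemma genie_identify_cond (D E : {set K}) n k :
  D \subset E -> Aslot A n :\: D = [set k] ->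
  identify_cond I A E n (Aslot A n :&: D) k.
Proof.
move=> DE XD; split; [exact: Aslot_setI_cand | split; first exact: subsetIl].
by rewrite setDIr setDv set0U.
Qed.

Lemma genie_step_sub_identify_terminal E : identify_terminal I A E ->
  forall D D', genie_step A D D' -> D \subset E -> D' \subset E.
Proof.
move=> termE D D' [n [k [XD ->]]] DE.
rewrite subUset DE andbT sub1set.
by apply: (termE n (Aslot A n :&: D)); apply: genie_identify_cond.
Qed.

End Decoders.

Theorem theorem3 (K : finType) (M : nat) (I A : K -> {set 'I_M})
  (hA : forall k, A k \subset I k) (DI Dg : {set K}) :
  identify_result I A DI -> genie_result A Dg -> DI = Dg.
Proof.
move=> [reachI termI] [reachG termG]; apply/eqP; rewrite eqEsubset.
apply/andP; split.
- exact: (clos_refl_trans_inv (identify_step_sub_genie_terminal termG) reachI (sub0set Dg)).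
- exact: (clos_refl_trans_inv (genie_step_sub_identify_terminal hA termI) reachG (sub0set DI)).
Qed.
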